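(* Let $r>0$, $\tau>0$, $\kappa>0$, $p\in[0,1]$ and $\varepsilon=pe^{-\tau}$. Let $\psi=(\psi_S,\psi_I,\psi_Q):[-\tau-\kappa,0]\to\mathbb{R}^3$ be a piecewise continuous function with values in the simplex $\Delta^2=\{u\in\mathbb{R}^3: u_1+u_2+u_3=1,\ u_i\ge 0\}$, and assume \[ \psi_I(0)\ \ge\ rp\int_{-\tau}^{0}e^{\theta}\psi_S(\theta)\psi_I(\theta)\,d\theta,\qquad \psi_Q(0)\ \ge\ r\varepsilon\int_{-\tau-\kappa}^{0}\psi_S(\theta)\psi_I(\theta)\,d\theta . \] Let $x(t;\psi)=(S(t),I(t),Q(t))$, $t\ge 0$, be the solution of the SIQ system with initial history $\psi$. Then $S(t),I(t),Q(t)\ge 0$ and $S(t)+I(t)+Q(t)=1$ for all $t\ge 0$, and $x_t(\psi)\in\tilde{\mathcal{C}}$ for all $t\ge\tau+\kappa$. In particular, if in addition $\psi\in\tilde{\mathcal{C}}$ (i.e. $\psi$ is continuous), then $x_t(\psi)\in\tilde{\mathcal{C}}$ for all $t\ge 0$.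
   Context: The SIQ system is the system of delay differential equations \[ \dot S(t)=-rS(t)I(t)+I(t)+r\varepsilon S(t-\tau-\kappa)I(t-\tau-\kappa),\quad \dot I(t)=rS(t)I(t)-I(t)-r\varepsilon S(t-\tau)I(t-\tau), \] \[ \dot Q(t)=r\varepsilon\big[S(t-\tau)I(t-\tau)-S(t-\tau-\kappa)I(t-\tau-\kappa)\big], \] with parameters $r>0,\tau>0,\kappa>0,p\in[0,1]$, $\varepsilon=pe^{-\tau}$. Given an initial history $\psi$ on $[-\tau-\kappa,0]$, $x(t;\psi)$ denotes the solution for $t\ge0$ with $x(\theta;\psi)=\psi(\theta)$ for $\theta\in[-\tau-\kappa,0]$, and $x_t(\psi)(\theta)=x(t+\theta;\psi)$, $\theta\in[-\tau-\kappa,0]$. $\tilde{\mathcal{C}}$ denotes the set of continuous functions $\phi:[-\tau-\kappa,0]\to\mathbb{R}^3$ with $\phi(\theta)\in\Delta^2$ for all $\theta$. *)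

From Stdlib Require Import Reals.
From Coquelicot Require Import Coquelicot.
Open Scope R_scope.

Definition Icc (a b : R) (x : R) : Prop := a <= x <= b.

Definition cont_within (f : R -> R) (a b x : R) : Prop :=
  filterlim f (within (Icc a b) (locally x)) (locally (f x)).

Definition continuous_on_Icc (f : R -> R) (a b : R) : Prop :=
  forall x, a <= x <= b -> cont_within f a b x.

Definition piecewise_continuous (f : R -> R) (a b : R) : Prop :=
  (exists l : list R, forall x, a <= x <= b -> ~ List.In x l -> cont_within f a b x)
  /\ (forall c, a < c <= b -> exists L : R, filterlim f (at_left c) (locally L))
  /\ (forall c, a <= c < b -> exists L : R, filterlim f (at_right c) (locally L)).

Definition in_simplex (u1 u2 u3 : R) : Prop :=
  0 <= u1 /\ 0 <= u2 /\ 0 <= u3 /\ u1 + u2 + u3 = 1.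

Definition eps (p tau : R) : R := p * exp (- tau).

Definition in_Ctilde (tau kappa : R) (phS phI phQ : R -> R) : Prop :=
  continuous_on_Icc phS (- tau - kappa) 0 /\
  continuous_on_Icc phI (- tau - kappa) 0 /\
  continuous_on_Icc phQ (- tau - kappa) 0 /\
  forall th, - tau - kappa <= th <= 0 -> in_simplex (phS th) (phI th) (phQ th).

Definition seg (x : R -> R) (t : R) : R -> R := fun th => x (t + th).

(* (S, I, Q) is a solution of the SIQ system with initial history psi:
   it coincides with psi on [-tau-kappa, 0], and for t >= 0 it satisfies the
   integrated form x(t) = x(0) + int_0^t f(x_s) ds (the integrand being
   Riemann integrable on [0,t]); this is the standard notion of solution for
   piecewise continuous initial histories. *)
Definition SIQ_solution (r tau kappa p : R) (psS psI psQ S I Q : R -> R) : Prop :=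
  (forall th, - tau - kappa <= th <= 0 ->
     S th = psS th /\ I th = psI th /\ Q th = psQ th) /\
  (forall t, 0 <= t ->
     is_RInt (fun s => - r * S s * I s + I s
                       + r * eps p tau * S (s - tau - kappa) * I (s - tau - kappa))
             0 t (S t - S 0) /\
     is_RInt (fun s => r * S s * I s - I s
                       - r * eps p tau * S (s - tau) * I (s - tau))
             0 t (I t - I 0) /\
     is_RInt (fun s => r * eps p tau * (S (s - tau) * I (s - tau)
                       - S (s - tau - kappa) * I (s - tau - kappa)))
             0 t (Q t - Q 0)).

From Stdlib Require Import Reals Lra Lia List Classical.
From Coquelicot Require Import Coquelicot.
Open Scope R_scope.

(* A solution is Lipschitz on every [[0,T]] and [S + I + Q] is conserved.  Nonnegativity of [I]
   cannot be read off its equation, whose delayed loss term has the wrong sign.  Instead one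
   follows [V = I - W], where [W t = r p \int_{t-tau}^t e^(y-t) S I dy] counts the currently
   infected who will be quarantined; then [V' = r (1 - p) S I - V], and the hypothesis on [psI 0]
   says exactly [V 0 >= 0].  A continuation argument keeps [S], [I] and [V] nonnegative: just
   after the last time they all were, a lower bound [-B] for [S] and [I] improves to [-B/2].
   Next, [Q t >= 0] because, by the hypothesis on [psQ 0], the quarantine compartment always
   contains what entered it during the last [kappa] time units.  Finally the segments [x_t] are
   continuous because the solution is Lipschitz for [t >= 0] and, when the history is
   continuous, continuous across [0]. *)

(** * Integrals, Lipschitz bounds and continuity *)

Lemma nonpos_of_le_div_INR x K : 0 <= K ->
  (forall n : nat, (0 < n)%nat -> x <= K / INR n) -> x <= 0.
Proof.
  intros HK H. apply Rnot_lt_le. intros Hx.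
  destruct (archimed_cor1 (x / (K + 1))) as [N [HN HN0]]; [apply Rdiv_lt_0_compat; lra|].
  specialize (H N HN0).
  assert (HNpos : 0 < / INR N) by (apply Rinv_0_lt_compat, lt_0_INR; exact HN0).
  assert (HKN : K * / INR N <= K * (x / (K + 1))) by (apply Rmult_le_compat_l; lra).
  assert (Hlt : K * (x / (K + 1)) < x).
  { apply Rmult_lt_reg_r with (K + 1); [lra|].
    replace (K * (x / (K + 1)) * (K + 1)) with (K * x) by (field; lra). nra. }
  unfold Rdiv in H. lra.
Qed.

Lemma nonneg_of_geometric_lower_bounds x M : 0 <= M ->
  (forall n : nat, - (M / 2 ^ n) <= x) -> 0 <= x.
Proof.
  intros HM H. cut (- x <= 0); [lra|].
  apply nonpos_of_le_div_INR with M; [exact HM|]. intros n Hn.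
  assert (Hpow : INR n <= 2 ^ n).
  { clear Hn. induction n as [|n IH]; [simpl; lra|].
    rewrite S_INR. simpl. pose proof (pow_R1_Rle 2 n ltac:(lra)). lra. }
  specialize (H n). apply Rle_trans with (M / 2 ^ n); [lra|].
  apply Rmult_le_compat_l; [exact HM|].
  apply Rinv_le_contravar; [apply lt_0_INR; exact Hn | exact Hpow].
Qed.

Lemma is_RInt_diff (f : R -> R) a u t x y :
  is_RInt f a u x -> is_RInt f a t y -> is_RInt f u t (y - x).
Proof.
  intros Hu Ht. replace (y - x) with (plus (opp x) y) by (unfold plus, opp; simpl; ring).
  apply is_RInt_Chasles with a; [apply is_RInt_swap|]; assumption.
Qed.

Lemma is_RInt_ge_const (f : R -> R) u s v m : u <= s -> is_RInt f u s v ->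
  (forall x, u < x < s -> m <= f x) -> m * (s - u) <= v.
Proof.
  intros Hus Hf Hm.
  replace (m * (s - u)) with (scal (s - u) m) by (unfold scal; simpl; unfold mult; simpl; ring).
  exact (is_RInt_le _ _ _ _ _ _ Hus (is_RInt_const u s m) Hf Hm).
Qed.

Lemma is_RInt_shift (f : R -> R) a b c l :
  is_RInt f (a - c) (b - c) l -> is_RInt (fun s => f (s - c)) a b l.
Proof.
  intros H.
  assert (H1 : is_RInt f (1 * a + - c) (1 * b + - c) l).
  { replace (1 * a + - c) with (a - c) by ring.
    replace (1 * b + - c) with (b - c) by ring. exact H. }
  generalize (is_RInt_comp_lin f 1 (- c) a b l H1). apply is_RInt_ext. intros s _.
  unfold scal; simpl; unfold mult; simpl. rewrite Rmult_1_l. f_equal; ring.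
Qed.

Lemma ex_RInt_inner (f : R -> R) a u v b : a <= u <= v -> v <= b -> ex_RInt f a b ->
  ex_RInt f u v.
Proof.
  intros Hauv Hvb Hf. apply (ex_RInt_Chasles_2 (V := R_CompleteNormedModule)) with a; [lra|].
  apply (ex_RInt_Chasles_1 (V := R_CompleteNormedModule)) with b; [lra | exact Hf].
Qed.

Lemma exp_le_exp x y : x <= y -> exp x <= exp y.
Proof. intros [Hlt | ->]; [left; apply exp_increasing, Hlt | right; reflexivity]. Qed.

Lemma is_RInt_exp_opp x y : is_RInt (fun s => exp (- s)) x y (exp (- x) - exp (- y)).
Proof.
  replace (exp (- x) - exp (- y)) with (minus (- exp (- y)) (- exp (- x)))
    by (unfold minus, plus, opp; simpl; ring).
  apply (is_RInt_derive (fun s => - exp (- s))).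
  - intros z _. auto_derive; [exact I | ring].
  - intros z _. apply (ex_derive_continuous (K := R_AbsRing) (V := R_NormedModule)).
    auto_derive. exact I.
Qed.

Definition lipschitz_on (g : R -> R) (a b : R) : Prop :=
  exists L, 0 <= L /\ forall x y, a <= x <= b -> a <= y <= b ->
    Rabs (g x - g y) <= L * Rabs (x - y).

Lemma lipschitz_on_of_is_RInt (h G : R -> R) a b : a <= b ->
  (forall u t, a <= u -> u <= t -> t <= b -> is_RInt h u t (G t - G u)) ->
  lipschitz_on G a b.
Proof.
  intros Hab HG.
  destruct (ex_RInt_ub h a b (ex_intro _ _ (HG a b (Rle_refl a) Hab (Rle_refl b)))) as [M HM].
  rewrite Rmin_left, Rmax_right in HM by lra.
  exists (Rmax 0 M). split; [apply Rmax_l|].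
  assert (Hxy : forall x y, a <= x -> x <= y -> y <= b -> Rabs (G y - G x) <= Rmax 0 M * (y - x)).
  { intros x y Hx Hxy Hy. rewrite Rmult_comm.
    apply (norm_RInt_le_const h x y); [lra| |apply HG; lra].
    intros z Hz. eapply Rle_trans; [apply HM; lra | apply Rmax_r]. }
  intros x y Hx Hy. destruct (Rle_dec x y).
  - rewrite Rabs_minus_sym, (Rabs_minus_sym x y), (Rabs_right (y - x)) by lra. apply Hxy; lra.
  - rewrite (Rabs_right (x - y)) by lra. apply Hxy; lra.
Qed.

Lemma lipschitz_on_bounded g a b : lipschitz_on g a b ->
  exists M, forall x, a <= x <= b -> Rabs (g x) <= M.
Proof.
  intros [L [HL Hg]]. exists (Rabs (g a) + L * (b - a)). intros x Hx.
  assert (Hab : a <= a <= b) by lra.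
  replace (g x) with ((g x - g a) + g a) by ring.
  eapply Rle_trans; [apply Rabs_triang|].
  pose proof (Hg x a Hx Hab). rewrite (Rabs_pos_eq (x - a)) in * by lra. nra.
Qed.

Lemma continuous_eps (f : R -> R) x : continuous f x <->
  forall e, 0 < e -> exists d, 0 < d /\ forall y, Rabs (y - x) < d -> Rabs (f y - f x) < e.
Proof.
  split.
  - intros H e He. destruct (proj1 (filterlim_locally f (f x)) H (mkposreal e He)) as [d Hd].
    exists d. split; [apply cond_pos|]. intros y Hy. exact (Hd y Hy).
  - intros H. apply filterlim_locally. intros e.
    destruct (H e (cond_pos e)) as [d [Hd Hf]]. exists (mkposreal d Hd). intros y Hy.
    exact (Hf y Hy).
Qed.

Lemma cont_within_eps (f : R -> R) a b x : cont_within f a b x <->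
  forall e, 0 < e -> exists d, 0 < d /\
    forall y, a <= y <= b -> Rabs (y - x) < d -> Rabs (f y - f x) < e.
Proof.
  split.
  - intros H e He. destruct (proj1 (filterlim_locally f (f x)) H (mkposreal e He)) as [d Hd].
    exists d. split; [apply cond_pos|]. intros y Hi Hy. exact (Hd y Hy Hi).
  - intros H. apply filterlim_locally. intros e.
    destruct (H e (cond_pos e)) as [d [Hd Hf]]. exists (mkposreal d Hd). intros y Hy Hi.
    exact (Hf y Hi Hy).
Qed.

Lemma continuous_of_cont_within (f : R -> R) a b x : a < x < b -> cont_within f a b x ->
  continuous f x.
Proof.
  intros Hx H. apply continuous_eps. intros e He.
  destruct (proj1 (cont_within_eps _ _ _ _) H e He) as [d [Hd Hf]].
  exists (Rmin d (Rmin (x - a) (b - x))). split; [repeat apply Rmin_pos; lra|].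
  intros y Hy. pose proof (Rmin_l d (Rmin (x - a) (b - x))).
  pose proof (Rmin_r d (Rmin (x - a) (b - x))).
  pose proof (Rmin_l (x - a) (b - x)). pose proof (Rmin_r (x - a) (b - x)).
  apply Rabs_def2 in Hy as Hy'. apply Hf; lra.
Qed.

Lemma cont_within_of_lipschitz_on (g : R -> R) a b x : lipschitz_on g a b -> a <= x <= b ->
  cont_within g a b x.
Proof.
  intros [L [HL Hg]] Hx. apply cont_within_eps. intros e He.
  exists (e / (L + 1)). split; [apply Rdiv_lt_0_compat; lra|].
  intros y Hy Hyx. eapply Rle_lt_trans; [apply Hg; assumption|].
  apply Rle_lt_trans with ((L + 1) * Rabs (y - x)).
  - apply Rmult_le_compat_r; [apply Rabs_pos | lra].
  - apply Rmult_lt_reg_l with (/ (L + 1)); [apply Rinv_0_lt_compat; lra|].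
    rewrite <- Rmult_assoc, Rinv_l, Rmult_1_l by lra. rewrite Rmult_comm. exact Hyx.
Qed.

Lemma continuous_on_Icc_of_lipschitz_on g a b : lipschitz_on g a b -> continuous_on_Icc g a b.
Proof. intros Hg x Hx. apply cont_within_of_lipschitz_on; assumption. Qed.

Lemma cont_within_ext (f g : R -> R) a b x : (forall y, a <= y <= b -> f y = g y) ->
  a <= x <= b -> cont_within f a b x -> cont_within g a b x.
Proof.
  intros E Hx H. apply cont_within_eps. intros e He.
  destruct (proj1 (cont_within_eps f a b x) H e He) as [d [Hd Hf]].
  exists d. split; [exact Hd|]. intros y Hy Hyx. rewrite <- !E by assumption. auto.
Qed.

Lemma cont_within_glue (g : R -> R) a c b x : a <= x <= b ->
  (x <= c -> cont_within g a c x) -> (c <= x -> cont_within g c b x) -> cont_within g a b x.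
Proof.
  intros Hx Hl Hr. apply cont_within_eps. intros e He.
  destruct (Rlt_le_dec x c) as [Hxc | Hcx].
  - destruct (proj1 (cont_within_eps _ _ _ _) (Hl (Rlt_le _ _ Hxc)) e He) as [d [Hd Hf]].
    exists (Rmin d (c - x)). split; [apply Rmin_pos; lra|].
    intros y Hy Hyx. pose proof (Rmin_l d (c - x)). pose proof (Rmin_r d (c - x)).
    apply Rabs_def2 in Hyx as Hyx'. apply Hf; lra.
  - destruct (proj1 (cont_within_eps _ _ _ _) (Hr Hcx) e He) as [d2 [Hd2 Hf2]].
    destruct (Req_dec x c) as [Ex | Nx].
    + destruct (proj1 (cont_within_eps _ _ _ _) (Hl (Req_le _ _ Ex)) e He) as [d1 [Hd1 Hf1]].
      exists (Rmin d1 d2). split; [apply Rmin_pos; lra|].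
      intros y Hy Hyx. pose proof (Rmin_l d1 d2). pose proof (Rmin_r d1 d2).
      destruct (Rle_dec y c); [apply Hf1 | apply Hf2]; lra.
    + exists (Rmin d2 (x - c)). split; [apply Rmin_pos; lra|].
      intros y Hy Hyx. pose proof (Rmin_l d2 (x - c)). pose proof (Rmin_r d2 (x - c)).
      apply Rabs_def2 in Hyx as Hyx'. apply Hf2; lra.
Qed.

Lemma cont_within_seg (g : R -> R) a b c d t x : (forall y, a <= y <= b -> c <= t + y <= d) ->
  cont_within g c d (t + x) -> cont_within (seg g t) a b x.
Proof.
  intros Hab H. apply cont_within_eps. intros e He.
  destruct (proj1 (cont_within_eps _ _ _ _) H e He) as [dl [Hd Hf]].
  exists dl. split; [exact Hd|]. intros y Hy Hyx. unfold seg. apply Hf; [auto|].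
  replace (t + y - (t + x)) with (y - x) by ring. exact Hyx.
Qed.

Lemma cont_within_seg_of_lipschitz_on (G : R -> R) a t th : 0 <= t + a ->
  lipschitz_on G 0 t -> a <= th <= 0 -> cont_within (seg G t) a 0 th.
Proof.
  intros Hta HG Hth. apply cont_within_seg with 0 t; [intros; lra|].
  apply cont_within_of_lipschitz_on; [exact HG | lra].
Qed.

Lemma cont_within_seg_glue (ps G : R -> R) a t th : a <= 0 -> 0 <= t ->
  continuous_on_Icc ps a 0 -> (forall y, a <= y <= 0 -> ps y = G y) ->
  lipschitz_on G 0 t -> a <= th <= 0 -> cont_within (seg G t) a 0 th.
Proof.
  intros Ha Ht Hps Heq HG Hth. apply cont_within_seg with a t; [intros; lra|].
  apply cont_within_glue with 0; [lra | |].
  - intros Hle. apply cont_within_ext with ps; [exact Heq | lra | apply Hps; lra].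
  - intros Hge. apply cont_within_of_lipschitz_on; [exact HG | lra].
Qed.

Definition clamp (a b y : R) : R := Rmax a (Rmin y b).

Lemma clamp_id a b y : a <= y <= b -> clamp a b y = y.
Proof. intros Hy. unfold clamp, Rmax, Rmin. repeat destruct Rle_dec; lra. Qed.

Lemma clamp_between a b y : a <= b -> a <= clamp a b y <= b.
Proof. intros Hab. unfold clamp, Rmax, Rmin. repeat destruct Rle_dec; lra. Qed.

Lemma clamp_contract a b y z : a <= b -> Rabs (clamp a b y - clamp a b z) <= Rabs (y - z).
Proof.
  intros Hab. pose proof (Rle_abs (y - z)). pose proof (Rle_abs (z - y)).
  rewrite (Rabs_minus_sym z y) in *.
  unfold clamp, Rmax, Rmin. repeat destruct Rle_dec; apply Rabs_le; split; lra.
Qed.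

Lemma continuous_clamp_of_lipschitz_on (g : R -> R) a b x : a <= b -> lipschitz_on g a b ->
  continuous (fun y => g (clamp a b y)) x.
Proof.
  intros Hab [L [HL Hg]]. apply continuous_eps. intros e He.
  exists (e / (L + 1)). split; [apply Rdiv_lt_0_compat; lra|].
  intros y Hy. eapply Rle_lt_trans; [apply Hg; apply clamp_between; exact Hab|].
  apply Rle_lt_trans with ((L + 1) * Rabs (y - x)).
  - apply Rmult_le_compat; [lra | apply Rabs_pos | lra | apply clamp_contract; exact Hab].
  - apply Rmult_lt_reg_l with (/ (L + 1)); [apply Rinv_0_lt_compat; lra|].
    rewrite <- Rmult_assoc, Rinv_l, Rmult_1_l by lra. rewrite Rmult_comm. exact Hy.
Qed.

Lemma continuous_clamp a b x : a <= b -> continuous (clamp a b) x.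
Proof.
  intros Hab. apply (continuous_clamp_of_lipschitz_on (fun y => y)); [exact Hab|].
  exists 1. split; [lra|]. intros y z _ _. lra.
Qed.

Lemma ex_RInt_of_continuous_clamp (g : R -> R) a b : a <= b ->
  (forall x, continuous (fun y => g (clamp a b y)) x) -> ex_RInt g a b.
Proof.
  intros Hab H. apply ex_RInt_ext with (fun y => g (clamp a b y)).
  - intros x Hx. rewrite Rmin_left, Rmax_right in Hx by lra. rewrite clamp_id by lra. reflexivity.
  - apply (@ex_RInt_continuous R_CompleteNormedModule). intros x _. apply H.
Qed.

(** * Piecewise continuous functions *)

Lemma filterlim_mult_R {T} (F : (T -> Prop) -> Prop) {FF : Filter F} (f g : T -> R) L M :
  filterlim f F (locally L) -> filterlim g F (locally M) ->
  filterlim (fun x => f x * g x) F (locally (L * M)).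
Proof. intros Hf Hg. exact (filterlim_comp_2 f g Rmult Hf Hg (@filterlim_mult R_AbsRing L M)). Qed.

Lemma piecewise_continuous_mult (f g : R -> R) a b :
  piecewise_continuous f a b -> piecewise_continuous g a b ->
  piecewise_continuous (fun x => f x * g x) a b.
Proof.
  intros [[l1 Hl1] [HL1 HR1]] [[l2 Hl2] [HL2 HR2]]. split; [|split].
  - exists (l1 ++ l2). intros x Hx Hn. unfold cont_within.
    apply (filterlim_mult_R (within (Icc a b) (locally x)) f g).
    + apply Hl1; [exact Hx|]. intro; apply Hn, in_or_app; auto.
    + apply Hl2; [exact Hx|]. intro; apply Hn, in_or_app; auto.
  - intros c Hc. destruct (HL1 c Hc) as [L H1], (HL2 c Hc) as [M H2].
    exists (L * M). apply (filterlim_mult_R (at_left c) f g); assumption.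
  - intros c Hc. destruct (HR1 c Hc) as [L H1], (HR2 c Hc) as [M H2].
    exists (L * M). apply (filterlim_mult_R (at_right c) f g); assumption.
Qed.

Lemma piecewise_continuous_of_continuous (f : R -> R) a b :
  (forall x, continuous f x) -> piecewise_continuous f a b.
Proof.
  intros H. split; [|split].
  - exists nil. intros x _ _. eapply filterlim_filter_le_1; [apply filter_le_within | apply H].
  - intros c _. exists (f c). eapply filterlim_filter_le_1; [apply filter_le_within | apply H].
  - intros c _. exists (f c). eapply filterlim_filter_le_1; [apply filter_le_within | apply H].
Qed.

Lemma at_right_eps (f : R -> R) a L : filterlim f (at_right a) (locally L) ->
  forall e, 0 < e -> exists d, 0 < d /\ forall y, a < y < a + d -> Rabs (f y - L) < e.
Proof.
  intros H e He. destruct (proj1 (filterlim_locally f L) H (mkposreal e He)) as [d Hd].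
  exists d. split; [apply cond_pos|]. intros y Hy. apply (Hd y); [|lra].
  change (Rabs (y - a) < d). apply Rabs_def1; lra.
Qed.

Lemma at_left_eps (f : R -> R) b L : filterlim f (at_left b) (locally L) ->
  forall e, 0 < e -> exists d, 0 < d /\ forall y, b - d < y < b -> Rabs (f y - L) < e.
Proof.
  intros H e He. destruct (proj1 (filterlim_locally f L) H (mkposreal e He)) as [d Hd].
  exists d. split; [apply cond_pos|]. intros y Hy. apply (Hd y); [|lra].
  change (Rabs (y - b) < d). apply Rabs_def1; lra.
Qed.

(* The extension of [f] by its one-sided limits outside [(a,b)] is continuous on [[a,b]]. *)
Lemma ex_RInt_of_continuous_open (f : R -> R) a b L1 L2 : a < b ->
  (forall x, a < x < b -> continuous f x) ->
  filterlim f (at_right a) (locally L1) -> filterlim f (at_left b) (locally L2) ->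
  ex_RInt f a b.
Proof.
  intros Hab Hc H1 H2.
  set (g y := if Rle_dec y a then L1 else if Rle_dec b y then L2 else f y).
  apply ex_RInt_ext with g.
  { intros x Hx. rewrite Rmin_left, Rmax_right in Hx by lra.
    unfold g. destruct (Rle_dec x a); [lra|]. destruct (Rle_dec b x); [lra|]. reflexivity. }
  apply (@ex_RInt_continuous R_CompleteNormedModule). intros z Hz.
  rewrite Rmin_left, Rmax_right in Hz by lra.
  apply continuous_eps. intros e He.
  destruct (Req_dec z a) as [->|Na]; [|destruct (Req_dec z b) as [->|Nb]].
  - destruct (at_right_eps f a L1 H1 e He) as [d [Hd Hf]].
    exists (Rmin d (b - a)). split; [apply Rmin_pos; lra|].
    intros y Hy. pose proof (Rmin_l d (b - a)). pose proof (Rmin_r d (b - a)).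
    apply Rabs_def2 in Hy. unfold g.
    destruct (Rle_dec a a); [|lra]. destruct (Rle_dec y a).
    + rewrite Rminus_diag, Rabs_R0. exact He.
    + destruct (Rle_dec b y); [lra|]. apply Hf; lra.
  - destruct (at_left_eps f b L2 H2 e He) as [d [Hd Hf]].
    exists (Rmin d (b - a)). split; [apply Rmin_pos; lra|].
    intros y Hy. pose proof (Rmin_l d (b - a)). pose proof (Rmin_r d (b - a)).
    apply Rabs_def2 in Hy. unfold g.
    destruct (Rle_dec b a); [lra|]. destruct (Rle_dec b b); [|lra].
    destruct (Rle_dec y a); [lra|]. destruct (Rle_dec b y).
    + rewrite Rminus_diag, Rabs_R0. exact He.
    + apply Hf; lra.
  - destruct (proj1 (continuous_eps f z) (Hc z ltac:(lra)) e He) as [d [Hd Hf]].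
    exists (Rmin d (Rmin (z - a) (b - z))). split; [repeat apply Rmin_pos; lra|].
    intros y Hy. pose proof (Rmin_l d (Rmin (z - a) (b - z))).
    pose proof (Rmin_r d (Rmin (z - a) (b - z))).
    pose proof (Rmin_l (z - a) (b - z)). pose proof (Rmin_r (z - a) (b - z)).
    apply Rabs_def2 in Hy as Hy'. unfold g.
    destruct (Rle_dec z a); [lra|]. destruct (Rle_dec b z); [lra|].
    destruct (Rle_dec y a); [lra|]. destruct (Rle_dec b y); [lra|]. apply Hf. lra.
Qed.

Lemma ex_RInt_piecewise (l : list R) : forall (f : R -> R) a b, a <= b ->
  (forall x, a < x < b -> ~ In x l -> continuous f x) ->
  (forall c, a < c <= b -> exists L, filterlim f (at_left c) (locally L)) ->
  (forall c, a <= c < b -> exists L, filterlim f (at_right c) (locally L)) ->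
  ex_RInt f a b.
Proof.
  induction l as [|x l IH]; intros f a b Hab Hc HL HR.
  - destruct (Req_dec a b) as [<-|Nab]; [apply ex_RInt_point|].
    destruct (HR a) as [L1 H1]; [lra|]. destruct (HL b) as [L2 H2]; [lra|].
    apply ex_RInt_of_continuous_open with L1 L2; [lra| |exact H1|exact H2].
    intros y Hy. apply Hc; auto.
  - assert (Hsub : forall u v, a <= u -> u <= v -> v <= b -> ~ (u < x < v) -> ex_RInt f u v).
    { intros u v Hu Huv Hv Hx. apply IH; [exact Huv| | |].
      - intros y Hy Hn. apply Hc; [lra|]. intros [E|E]; [subst; lra|auto].
      - intros c Hc'. apply HL. lra.
      - intros c Hc'. apply HR. lra. }
    destruct (classic (a < x < b)) as [Hx|Hx].
    + apply ex_RInt_Chasles with x; apply Hsub; lra.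
    + apply Hsub; lra.
Qed.

Lemma ex_RInt_of_piecewise_continuous (f : R -> R) a b : a <= b ->
  piecewise_continuous f a b -> ex_RInt f a b.
Proof.
  intros Hab [[l Hl] [HL HR]]. apply (ex_RInt_piecewise l); auto.
  intros x Hx Hn. apply continuous_of_cont_within with a b; [exact Hx|]. apply Hl; [lra|exact Hn].
Qed.

Lemma ex_RInt_glue (g ps : R -> R) a c b : a <= c <= b -> piecewise_continuous ps a c ->
  (forall y, a < y < c -> g y = ps y) -> (forall x, continuous (fun y => g (clamp c b y)) x) ->
  ex_RInt g a b.
Proof.
  intros Hacb Hps Heq Hcont. apply ex_RInt_Chasles with c.
  - apply ex_RInt_ext with ps; [|apply ex_RInt_of_piecewise_continuous; [lra | exact Hps]].
    intros x Hx. rewrite Rmin_left, Rmax_right in Hx by lra. symmetry. apply Heq, Hx.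
  - apply ex_RInt_of_continuous_clamp; [lra | exact Hcont].
Qed.

(** * Exponential averages *)

(* Cutting [[a,b]] into [n] equal pieces bounds [|D b - D a|] by [C (b - a)^2 / n]. *)
Lemma const_of_quadratic_increments (D : R -> R) a b C : a <= b -> 0 <= C ->
  (forall x y, a <= x -> x <= y -> y <= b -> Rabs (D y - D x) <= C * (y - x) ^ 2) ->
  D b = D a.
Proof.
  intros Hab HC H.
  assert (Hn : forall n : nat, (0 < n)%nat -> Rabs (D b - D a) <= C * (b - a) ^ 2 / INR n).
  { intros n Hn. assert (HN : 0 < INR n) by (apply lt_0_INR; exact Hn).
    set (h := (b - a) / INR n).
    assert (Hh : 0 <= h) by (apply Rdiv_le_0_compat; lra).
    assert (Hnh : INR n * h = b - a) by (unfold h; field; lra).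
    assert (Hk : forall k : nat, (k <= n)%nat ->
               Rabs (D (a + INR k * h) - D a) <= INR k * (C * h ^ 2)).
    { induction k as [|k IH]; intros Hk.
      - simpl. rewrite Rmult_0_l, Rplus_0_r, Rminus_diag, Rabs_R0. lra.
      - assert (Hk1 : INR (S k) <= INR n) by (apply le_INR; exact Hk).
        rewrite S_INR in *. pose proof (pos_INR k).
        assert (Hstep : Rabs (D (a + (INR k + 1) * h) - D (a + INR k * h)) <= C * h ^ 2).
        { replace (C * h ^ 2) with (C * ((a + (INR k + 1) * h) - (a + INR k * h)) ^ 2) by ring.
          apply H; nra. }
        replace (D (a + (INR k + 1) * h) - D a) with
          ((D (a + (INR k + 1) * h) - D (a + INR k * h)) + (D (a + INR k * h) - D a)) by ring.
        eapply Rle_trans; [apply Rabs_triang|]. specialize (IH ltac:(lia)). lra. }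
    specialize (Hk n (Nat.le_refl n)). rewrite Hnh in Hk.
    replace (a + (b - a)) with b in Hk by ring.
    replace (C * (b - a) ^ 2 / INR n) with (INR n * (C * h ^ 2)) by (unfold h; field; lra).
    exact Hk. }
  apply Rminus_diag_uniq, Rabs_eq_0, Rle_antisym; [|apply Rabs_pos].
  apply nonpos_of_le_div_INR with (C * (b - a) ^ 2); [|exact Hn].
  apply Rmult_le_pos; [exact HC | apply pow2_ge_0].
Qed.

Lemma is_RInt_RInt_diff (g : R -> R) a X x y : a <= x -> x <= y -> y <= X -> ex_RInt g a X ->
  is_RInt g x y (RInt g a y - RInt g a x).
Proof.
  intros Hx Hxy Hy Hg. apply is_RInt_diff with a;
    apply (RInt_correct (V := R_CompleteNormedModule)), ex_RInt_Chasles_1 with X; auto; lra.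
Qed.

Definition exp_avg (f : R -> R) (a t : R) : R := exp (- t) * RInt (fun y => exp y * f y) a t.

Section Exp_avg.

Variables (f : R -> R) (a X : R).
Hypotheses (HaX : a <= X) (Hf : ex_RInt f a X) (Hef : ex_RInt (fun y => exp y * f y) a X).

Let H (x : R) : R := RInt (fun y => exp y * f y) a x.

Lemma lipschitz_on_exp_integral : lipschitz_on H a X.
Proof.
  apply lipschitz_on_of_is_RInt with (h := fun y => exp y * f y); [exact HaX|].
  intros u t Hu Hut Ht. apply is_RInt_RInt_diff with X; assumption.
Qed.

Lemma ex_RInt_exp_avg : ex_RInt (exp_avg f a) a X.
Proof.
  apply ex_RInt_of_continuous_clamp; [exact HaX|]. intros x.
  apply (continuous_mult (fun y => exp (- clamp a X y)) (fun y => H (clamp a X y))).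
  - apply (continuous_comp (clamp a X) (fun z => exp (- z))); [apply continuous_clamp, HaX|].
    apply (ex_derive_continuous (K := R_AbsRing) (V := R_NormedModule)). auto_derive. exact I.
  - apply continuous_clamp_of_lipschitz_on; [exact HaX | exact lipschitz_on_exp_integral].
Qed.

(* The defect splits into two integrals over [[x,y]] whose integrands are [O(y - x)]. *)
Lemma exp_avg_quadratic_defect : exists C, 0 <= C /\ forall x y, a <= x -> x <= y -> y <= X ->
  Rabs ((exp_avg f a y - RInt f a y + RInt (exp_avg f a) a y)
        - (exp_avg f a x - RInt f a x + RInt (exp_avg f a) a x)) <= C * (y - x) ^ 2.
Proof.
  destruct (ex_RInt_ub f a X Hf) as [M HM]. rewrite Rmin_left, Rmax_right in HM by lra.
  destruct lipschitz_on_exp_integral as [LH [HLH HHlip]].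
  exists (Rmax 0 M + exp (- a) * LH).
  split; [pose proof (Rmax_l 0 M); pose proof (exp_pos (- a)); nra|].
  intros x y Hx Hxy Hy.
  assert (B1 : Rabs (exp (- y) * (H y - H x) - (RInt f a y - RInt f a x))
               <= (y - x) * (Rmax 0 M * (y - x))).
  { apply (norm_RInt_le_const (fun s => exp (- y) * (exp s * f s) - f s) x y); [exact Hxy| |].
    - intros s Hs.
      replace (exp (- y) * (exp s * f s) - f s) with (f s * (exp (s - y) - 1))
        by (unfold Rminus; rewrite exp_plus; ring).
      change (norm ?z) with (Rabs z). rewrite Rabs_mult.
      apply Rmult_le_compat; [apply Rabs_pos | apply Rabs_pos | |].
      + eapply Rle_trans; [apply HM; lra | apply Rmax_r].
      + assert (exp (s - y) <= 1) by (rewrite <- exp_0; apply exp_le_exp; lra).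
        pose proof (exp_ineq1_le (s - y)). rewrite Rabs_left1; lra.
    - apply (is_RInt_minus (V := R_NormedModule)); [|apply is_RInt_RInt_diff with X; assumption].
      exact (is_RInt_scal (V := R_NormedModule) _ x y (exp (- y)) _
               (is_RInt_RInt_diff _ a X x y Hx Hxy Hy Hef)). }
  assert (B2 : Rabs (RInt (exp_avg f a) a y - RInt (exp_avg f a) a x
                     - H x * (exp (- x) - exp (- y)))
               <= (y - x) * (exp (- a) * LH * (y - x))).
  { apply (norm_RInt_le_const (fun s => exp_avg f a s - H x * exp (- s)) x y); [exact Hxy| |].
    - intros s Hs. change (norm ?z) with (Rabs z). unfold exp_avg. fold (H s).
      replace (exp (- s) * H s - H x * exp (- s)) with (exp (- s) * (H s - H x)) by ring.
      rewrite Rabs_mult, Rabs_pos_eq by (left; apply exp_pos).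
      rewrite Rmult_assoc. apply Rmult_le_compat; [left; apply exp_pos | apply Rabs_pos | |].
      + apply exp_le_exp. lra.
      + eapply Rle_trans; [apply HHlip; lra|].
        rewrite Rabs_pos_eq by lra. apply Rmult_le_compat_l; lra.
    - apply (is_RInt_minus (V := R_NormedModule)).
      + apply is_RInt_RInt_diff with X; [..| exact ex_RInt_exp_avg]; assumption.
      + exact (is_RInt_scal (V := R_NormedModule) _ x y (H x) _ (is_RInt_exp_opp x y)). }
  unfold exp_avg at 1 3. fold (H x) (H y).
  match goal with |- Rabs ?L <= _ => replace L with
    ((exp (- y) * (H y - H x) - (RInt f a y - RInt f a x))
     + (RInt (exp_avg f a) a y - RInt (exp_avg f a) a x - H x * (exp (- x) - exp (- y))))
    by ring end.
  eapply Rle_trans; [apply Rabs_triang|]. nra.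
Qed.

(* [K = exp_avg f a] solves [K' = f - K]; as [f] is merely integrable, this is obtained from
   the quadratic defect rather than by differentiation. *)
Lemma is_RInt_exp_avg u t : a <= u -> u <= t -> t <= X ->
  is_RInt (fun s => f s - exp_avg f a s) u t (exp_avg f a t - exp_avg f a u).
Proof.
  intros Hu Hut Ht.
  set (D x := exp_avg f a x - RInt f a x + RInt (exp_avg f a) a x).
  destruct exp_avg_quadratic_defect as [C [HC HD]].
  assert (HD0 : forall x, a <= x <= X -> D x = 0).
  { intros x Hx. replace 0 with (D a).
    - apply const_of_quadratic_increments with C; [lra | exact HC |].
      intros y z Hy Hyz Hz. apply HD; lra.
    - unfold D, exp_avg. rewrite !RInt_point. unfold zero; simpl. ring. }
  replace (exp_avg f a t - exp_avg f a u)
    with ((RInt f a t - RInt f a u) - (RInt (exp_avg f a) a t - RInt (exp_avg f a) a u)).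
  - apply (is_RInt_minus (V := R_NormedModule)); apply is_RInt_RInt_diff with X;
      try assumption; exact ex_RInt_exp_avg.
  - pose proof (HD0 t ltac:(lra)). pose proof (HD0 u ltac:(lra)). unfold D in *. lra.
Qed.

End Exp_avg.

(** * Continuation arguments *)

Lemma nonneg_of_nonneg_before g a t : a < t -> continuous_on_Icc g a t ->
  (forall s, a <= s < t -> 0 <= g s) -> 0 <= g t.
Proof.
  intros Hat Hg Hs. apply Rnot_lt_le. intros Hgt.
  destruct (proj1 (cont_within_eps _ _ _ _) (Hg t ltac:(lra)) (- g t) ltac:(lra)) as [d [Hd Hf]].
  set (s := Rmax a (t - d / 2)).
  assert (Hs1 : a <= s) by apply Rmax_l. assert (Hs2 : t - d / 2 <= s) by apply Rmax_r.
  assert (Hs3 : s < t) by (unfold s, Rmax; destruct Rle_dec; lra).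
  specialize (Hs s ltac:(lra)). specialize (Hf s ltac:(lra) ltac:(apply Rabs_def1; lra)).
  apply Rabs_def2 in Hf. lra.
Qed.

Lemma last_nonneg_point g a b : a <= b -> continuous_on_Icc g a b -> 0 <= g a ->
  exists u, a <= u <= b /\ 0 <= g u /\ forall v, u < v <= b -> g v < 0.
Proof.
  intros Hab Hg Ha.
  set (E x := a <= x <= b /\ 0 <= g x).
  destruct (completeness E) as [m [Hub Hlub]].
  { exists b. intros x [Hx _]. lra. }
  { exists a. split; [lra | exact Ha]. }
  assert (Ham : a <= m) by (apply Hub; split; [lra | exact Ha]).
  assert (Hmb : m <= b) by (apply Hlub; intros x [Hx _]; lra).
  exists m. split; [lra|]. split.
  - apply Rnot_lt_le. intros Hgm.
    destruct (proj1 (cont_within_eps _ _ _ _) (Hg m ltac:(lra)) (- g m) ltac:(lra)) as [d [Hd Hf]].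
    assert (Hx : exists x, E x /\ m - d < x).
    { apply NNPP. intros Hn. assert (m <= m - d); [|lra].
      apply Hlub. intros x Hx. apply Rnot_lt_le. intros Hlt. apply Hn. exists x; auto. }
    destruct Hx as [x [[Hx Hgx] Hxm]]. assert (x <= m) by (apply Hub; split; auto).
    specialize (Hf x Hx ltac:(apply Rabs_def1; lra)). apply Rabs_def2 in Hf. lra.
  - intros v Hv. apply Rnot_le_lt. intros Hgv.
    assert (v <= m) by (apply Hub; split; [lra | exact Hgv]). lra.
Qed.

Lemma barrier_lower_bound (g h : R -> R) a s c : a <= s -> 0 <= c ->
  continuous_on_Icc g a s -> 0 <= g a ->
  (forall u v, a <= u -> u <= v -> v <= s -> is_RInt h u v (g v - g u)) ->
  (forall y, a < y < s -> g y < 0 -> - c <= h y) ->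
  - (c * (s - a)) <= g s.
Proof.
  intros Has Hc Hg Ha Hgh Hh.
  destruct (Rle_dec 0 (g s)) as [Hs|Hs]; [nra|].
  destruct (last_nonneg_point g a s Has Hg Ha) as [u [Hu [Hgu Hneg]]].
  assert (Hint : - c * (s - u) <= g s - g u).
  { apply is_RInt_ge_const with h; [lra | apply Hgh; lra|].
    intros y Hy. apply Hh; [lra | apply Hneg; lra]. }
  nra.
Qed.

Lemma real_induction (P : R -> Prop) : P 0 ->
  (forall t, 0 < t -> (forall s, 0 <= s < t -> P s) -> P t) ->
  (forall t, 0 <= t -> (forall s, 0 <= s <= t -> P s) ->
     exists d, 0 < d /\ forall s, t <= s <= t + d -> P s) ->
  forall t, 0 <= t -> P t.
Proof.
  intros H0 Hclosed Hext t1 Ht1. apply NNPP. intros Hn.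
  set (E x := 0 <= x /\ forall s, 0 <= s <= x -> P s).
  assert (HE0 : E 0) by (split; [lra | intros s Hs; replace s with 0 by lra; exact H0]).
  destruct (completeness E) as [m [Hub Hlub]].
  { exists t1. intros x [Hx Hs]. apply Rnot_lt_le. intros Hlt. apply Hn, Hs. lra. }
  { exists 0. exact HE0. }
  assert (Hm0 : 0 <= m) by (apply Hub, HE0).
  assert (Hbefore : forall s, 0 <= s < m -> P s).
  { intros s Hs. apply NNPP. intros Hps. assert (m <= s); [|lra].
    apply Hlub. intros x [Hx Hx']. apply Rnot_lt_le. intros Hlt. apply Hps, Hx'. lra. }
  assert (Hupto : forall s, 0 <= s <= m -> P s).
  { intros s Hs. destruct (Req_dec s m) as [->|Ns]; [|apply Hbefore; lra].
    destruct (Req_dec m 0) as [->|Nm]; [exact H0 | apply Hclosed; [lra | exact Hbefore]]. }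
  destruct (Hext m Hm0 Hupto) as [d [Hd Hd']].
  assert (m + d <= m); [|lra].
  apply Hub. split; [lra|]. intros s Hs.
  destruct (Rle_dec s m); [apply Hupto | apply Hd']; lra.
Qed.

(** * The SIQ system *)
Section SIQ.

Variables (r tau kappa p : R) (psS psI psQ S I Q : R -> R).
Hypotheses (Hr : 0 < r) (Htau : 0 < tau) (Hkappa : 0 < kappa) (Hp : 0 <= p <= 1).
Hypotheses (PCS : piecewise_continuous psS (- tau - kappa) 0)
  (PCI : piecewise_continuous psI (- tau - kappa) 0).
Hypothesis Hsimplex :
  forall th, - tau - kappa <= th <= 0 -> in_simplex (psS th) (psI th) (psQ th).
Hypothesis HypI : psI 0 >= r * p * RInt (fun th => exp th * psS th * psI th) (- tau) 0.
Hypothesis HypQ :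
  psQ 0 >= r * eps p tau * RInt (fun th => psS th * psI th) (- tau - kappa) 0.
Hypothesis Hsol : SIQ_solution r tau kappa p psS psI psQ S I Q.

Let SI (s : R) : R := S s * I s.

Lemma history_simplex th : - tau - kappa <= th <= 0 -> in_simplex (S th) (I th) (Q th).
Proof. intros Hth. destruct (proj1 Hsol th Hth) as [-> [-> ->]]. apply Hsimplex, Hth. Qed.

Lemma is_RInt_S u t : 0 <= u -> u <= t ->
  is_RInt (fun s => - r * S s * I s + I s
                    + r * eps p tau * S (s - tau - kappa) * I (s - tau - kappa)) u t (S t - S u).
Proof.
  intros Hu Hut. replace (S t - S u) with ((S t - S 0) - (S u - S 0)) by ring.
  apply is_RInt_diff with 0; apply (proj2 Hsol); lra.
Qed.

Lemma is_RInt_I u t : 0 <= u -> u <= t ->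
  is_RInt (fun s => r * S s * I s - I s - r * eps p tau * S (s - tau) * I (s - tau))
    u t (I t - I u).
Proof.
  intros Hu Hut. replace (I t - I u) with ((I t - I 0) - (I u - I 0)) by ring.
  apply is_RInt_diff with 0; apply (proj2 Hsol); lra.
Qed.

Lemma is_RInt_Q u t : 0 <= u -> u <= t ->
  is_RInt (fun s => r * eps p tau * (S (s - tau) * I (s - tau)
                    - S (s - tau - kappa) * I (s - tau - kappa))) u t (Q t - Q u).
Proof.
  intros Hu Hut. replace (Q t - Q u) with ((Q t - Q 0) - (Q u - Q 0)) by ring.
  apply is_RInt_diff with 0; apply (proj2 Hsol); lra.
Qed.

Lemma lipschitz_S a b : 0 <= a <= b -> lipschitz_on S a b.
Proof.
  intros Hab. eapply lipschitz_on_of_is_RInt; [lra|].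
  intros u t Hu Hut Ht. apply is_RInt_S; lra.
Qed.

Lemma lipschitz_I a b : 0 <= a <= b -> lipschitz_on I a b.
Proof.
  intros Hab. eapply lipschitz_on_of_is_RInt; [lra|].
  intros u t Hu Hut Ht. apply is_RInt_I; lra.
Qed.

Lemma lipschitz_Q a b : 0 <= a <= b -> lipschitz_on Q a b.
Proof.
  intros Hab. eapply lipschitz_on_of_is_RInt; [lra|].
  intros u t Hu Hut Ht. apply is_RInt_Q; lra.
Qed.

Lemma SIQ_sum t : 0 <= t -> S t + I t + Q t = 1.
Proof.
  intros Ht.
  assert (Hz : is_RInt (fun _ => 0) 0 t ((S t - S 0) + (I t - I 0) + (Q t - Q 0))).
  { refine (is_RInt_ext _ _ _ _ _ _ (is_RInt_plus _ _ _ _ _ _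
      (is_RInt_plus _ _ _ _ _ _ (is_RInt_S 0 t (Rle_refl 0) Ht) (is_RInt_I 0 t (Rle_refl 0) Ht))
      (is_RInt_Q 0 t (Rle_refl 0) Ht))).
    intros s _. unfold plus; simpl. ring. }
  apply (is_RInt_unique (V := R_CompleteNormedModule)) in Hz.
  rewrite RInt_const in Hz. unfold scal in Hz; simpl in Hz. unfold mult in Hz; simpl in Hz.
  destruct (history_simplex 0) as [_ [_ [_ H0]]]; [lra|]. lra.
Qed.

Lemma SI_bounded T : 0 <= T -> exists M, 0 <= M /\
  forall s, - tau - kappa <= s <= T -> Rabs (S s) <= M /\ Rabs (I s) <= M.
Proof.
  intros HT.
  destruct (lipschitz_on_bounded S 0 T (lipschitz_S 0 T ltac:(lra))) as [MS HMS].
  destruct (lipschitz_on_bounded I 0 T (lipschitz_I 0 T ltac:(lra))) as [MI HMI].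
  exists (Rmax 1 (Rmax MS MI)).
  pose proof (Rmax_l 1 (Rmax MS MI)). pose proof (Rmax_r 1 (Rmax MS MI)).
  pose proof (Rmax_l MS MI). pose proof (Rmax_r MS MI).
  split; [lra|]. intros s Hs. destruct (Rle_dec s 0).
  - destruct (history_simplex s) as [HS [HI [HQ Hsum]]]; [lra|].
    rewrite !Rabs_pos_eq by lra. split; lra.
  - pose proof (HMS s ltac:(lra)). pose proof (HMI s ltac:(lra)). split; lra.
Qed.

Lemma continuous_SI_clamp X x : 0 <= X -> continuous (fun y => SI (clamp 0 X y)) x.
Proof.
  intros HX. apply (continuous_mult (fun y => S (clamp 0 X y)) (fun y => I (clamp 0 X y)));
    apply continuous_clamp_of_lipschitz_on; try apply lipschitz_S; try apply lipschitz_I; lra.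
Qed.

Lemma ex_RInt_SI X : 0 <= X -> ex_RInt SI (- tau - kappa) X.
Proof.
  intros HX. apply (ex_RInt_glue SI (fun y => psS y * psI y) _ 0); [lra | | |].
  - apply piecewise_continuous_mult; assumption.
  - intros y Hy. unfold SI. destruct (proj1 Hsol y ltac:(lra)) as [-> [-> _]]. reflexivity.
  - intros x. apply continuous_SI_clamp, HX.
Qed.

Lemma ex_RInt_exp_SI X : 0 <= X -> ex_RInt (fun y => exp y * SI y) (- tau - kappa) X.
Proof.
  intros HX. apply (ex_RInt_glue _ (fun y => exp y * (psS y * psI y)) _ 0); [lra | | |].
  - apply piecewise_continuous_mult; [|apply piecewise_continuous_mult; assumption].
    apply piecewise_continuous_of_continuous, continuous_exp.
  - intros y Hy. unfold SI. destruct (proj1 Hsol y ltac:(lra)) as [-> [-> _]]. reflexivity.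
  - intros x. apply (continuous_mult (fun y => exp (clamp 0 X y)) (fun y => SI (clamp 0 X y))).
    + apply (continuous_comp (clamp 0 X) exp); [apply continuous_clamp; lra | apply continuous_exp].
    + apply continuous_SI_clamp, HX.
Qed.

Lemma is_RInt_SI u v : - tau - kappa <= u -> u <= v -> is_RInt SI u v (RInt SI u v).
Proof.
  intros Hu Huv. apply (RInt_correct (V := R_CompleteNormedModule)).
  apply ex_RInt_inner with (- tau - kappa) (Rmax 0 v); [lra | pose proof (Rmax_r 0 v); lra |].
  apply ex_RInt_SI, Rmax_l.
Qed.

Lemma is_RInt_exp_SI u v : - tau - kappa <= u -> u <= v ->
  is_RInt (fun y => exp y * SI y) u v (RInt (fun y => exp y * SI y) u v).
Proof.
  intros Hu Huv. apply (RInt_correct (V := R_CompleteNormedModule)).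
  apply ex_RInt_inner with (- tau - kappa) (Rmax 0 v); [lra | pose proof (Rmax_r 0 v); lra |].
  apply ex_RInt_exp_SI, Rmax_l.
Qed.

Lemma history_S_I_nonneg s : - tau - kappa <= s <= 0 -> 0 <= S s /\ 0 <= I s.
Proof. intros Hs. destruct (history_simplex s Hs) as [HS [HI _]]. split; assumption. Qed.

Let A (t : R) : R := exp_avg SI (- tau - kappa) t.
Let W (t : R) : R := r * p * (A t - exp (- tau) * A (t - tau)).
Let V (t : R) : R := I t - W t.

Lemma is_RInt_A u t : - tau - kappa <= u -> u <= t ->
  is_RInt (fun s => SI s - A s) u t (A t - A u).
Proof.
  intros Hu Hut. pose proof (Rmax_l 0 t). pose proof (Rmax_r 0 t).
  apply is_RInt_exp_avg with (Rmax 0 t); [lra | apply ex_RInt_SI | apply ex_RInt_exp_SI | | |]; lra.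
Qed.

(* [V' = r (1 - p) S I - V]: the delayed loss term of [I'] is cancelled by that of [W']. *)
Lemma is_RInt_V u t : 0 <= u -> u <= t ->
  is_RInt (fun s => r * (1 - p) * SI s - V s) u t (V t - V u).
Proof.
  intros Hu Hut.
  pose proof (is_RInt_A u t ltac:(lra) Hut) as HA.
  pose proof (is_RInt_shift _ u t tau _
                (is_RInt_A (u - tau) (t - tau) ltac:(lra) ltac:(lra))) as HAd.
  pose proof (is_RInt_I u t Hu Hut) as HI.
  pose proof (is_RInt_minus (V := R_NormedModule) _ _ _ _ _ _ HI
    (is_RInt_scal (V := R_NormedModule) _ _ _ (r * p) _
      (is_RInt_minus (V := R_NormedModule) _ _ _ _ _ _ HA
        (is_RInt_scal (V := R_NormedModule) _ _ _ (exp (- tau)) _ HAd)))) as H.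
  replace (V t - V u) with
    (minus (I t - I u)
       (scal (r * p) (minus (A t - A u) (scal (exp (- tau)) (A (t - tau) - A (u - tau))))))
    by (unfold V, W, minus, plus, opp, scal; simpl; unfold mult; simpl; ring).
  refine (is_RInt_ext _ _ _ _ _ _ H). intros s _.
  unfold V, W, SI, eps, minus, plus, opp, scal; simpl; unfold mult; simpl. ring.
Qed.

Lemma W_eq s : 0 <= s -> W s = r * p * exp (- s) * RInt (fun y => exp y * SI y) (s - tau) s.
Proof.
  intros Hs. unfold W, A, exp_avg.
  rewrite <- (RInt_Chasles (V := R_CompleteNormedModule) _ (- tau - kappa) (s - tau) s)
    by (eexists; apply is_RInt_exp_SI; lra).
  assert (E : exp (- tau) * exp (- (s - tau)) = exp (- s)) by (rewrite <- exp_plus; f_equal; ring).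
  unfold plus; simpl. rewrite <- E. ring.
Qed.

Lemma V0_nonneg : 0 <= V 0.
Proof.
  unfold V. rewrite W_eq, Ropp_0, exp_0, Rminus_0_l by lra.
  destruct (proj1 Hsol 0 ltac:(lra)) as [_ [-> _]].
  replace (RInt (fun y => exp y * SI y) (- tau) 0)
    with (RInt (fun th => exp th * psS th * psI th) (- tau) 0); [lra|].
  apply RInt_ext. intros x Hx. rewrite Rmin_left, Rmax_right in Hx by lra.
  unfold SI. destruct (proj1 Hsol x ltac:(lra)) as [-> [-> _]]. apply Rmult_assoc.
Qed.

Lemma lipschitz_V a b : 0 <= a <= b -> lipschitz_on V a b.
Proof.
  intros Hab. eapply lipschitz_on_of_is_RInt; [lra|].
  intros u t Hu Hut Ht. apply is_RInt_V; lra.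
Qed.

Lemma eps_nonneg : 0 <= eps p tau.
Proof. unfold eps. apply Rmult_le_pos; [lra | left; apply exp_pos]. Qed.

Section Extension.

Variables (a d M B : R).
Hypotheses (Ha : 0 <= a) (Hd : 0 < d) (Hdtau : d <= tau) (HM0 : 0 <= M) (HB : 0 <= B).
Hypothesis Hpast : forall s, 0 <= s <= a -> 0 <= S s /\ 0 <= I s /\ 0 <= V s.
Hypothesis HM : forall s, - tau - kappa <= s <= a + d -> Rabs (S s) <= M /\ Rabs (I s) <= M.
Hypothesis HBSI : forall s, a <= s <= a + d -> - B <= S s /\ - B <= I s.

Lemma SI_nonneg_before s : - tau - kappa <= s <= a -> 0 <= SI s.
Proof.
  intros Hs. unfold SI. destruct (Rle_dec s 0).
  - destruct (history_S_I_nonneg s) as [HS HI]; [lra|]. apply Rmult_le_pos; assumption.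
  - destruct (Hpast s) as [HS [HI _]]; [lra|]. apply Rmult_le_pos; assumption.
Qed.

Lemma SI_lower_bound s : a <= s <= a + d -> - (M * B) <= SI s.
Proof.
  intros Hs. destruct (HM s ltac:(lra)) as [HSM HIM]. destruct (HBSI s Hs) as [HSB HIB].
  apply Rabs_le_between in HSM, HIM. unfold SI.
  destruct (Rle_dec 0 (S s)), (Rle_dec 0 (I s)); nra.
Qed.

Lemma S_lower_bound s : a <= s <= a + d -> - ((1 + r * M) * B * d) <= S s.
Proof.
  intros Hs.
  assert (Hbar : - ((1 + r * M) * B * (s - a)) <= S s).
  { apply barrier_lower_bound with (h := fun y => - r * S y * I y + I y
            + r * eps p tau * S (y - tau - kappa) * I (y - tau - kappa)).
    - lra.
    - apply Rmult_le_pos; [nra | exact HB].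
    - apply continuous_on_Icc_of_lipschitz_on, lipschitz_S. lra.
    - apply Hpast. lra.
    - intros u v Hu Huv Hv. apply is_RInt_S; lra.
    - intros y Hy HSy.
      destruct (HM y ltac:(lra)) as [HSM HIM]. destruct (HBSI y ltac:(lra)) as [_ HIB].
      apply Rabs_le_between in HSM, HIM.
      assert (Hdelay : 0 <= r * eps p tau * (S (y - tau - kappa) * I (y - tau - kappa))).
      { apply Rmult_le_pos; [apply Rmult_le_pos; [lra | apply eps_nonneg]|].
        apply SI_nonneg_before. lra. }
      assert (Hgrowth : - ((1 + r * M) * B) <= I y * (1 - r * S y)).
      { assert (HrS : - (r * M) <= r * S y < 0) by (split; nra).
        destruct (Rle_dec 0 (I y)).
        - assert (0 <= I y * (1 - r * S y)) by (apply Rmult_le_pos; lra).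
          assert (0 <= (1 + r * M) * B) by (apply Rmult_le_pos; lra). lra.
        - nra. }
      nra. }
  assert ((1 + r * M) * B * (s - a) <= (1 + r * M) * B * d); [|lra].
  apply Rmult_le_compat_l; [apply Rmult_le_pos; nra | lra].
Qed.

Lemma V_lower_bound s : a <= s <= a + d -> - (r * M * B * d) <= V s.
Proof.
  intros Hs.
  assert (Hbar : - (r * M * B * (s - a)) <= V s).
  { apply barrier_lower_bound with (h := fun y => r * (1 - p) * SI y - V y).
    - lra.
    - apply Rmult_le_pos; [apply Rmult_le_pos|]; lra.
    - apply continuous_on_Icc_of_lipschitz_on, lipschitz_V. lra.
    - apply Hpast. lra.
    - intros u v Hu Huv Hv. apply is_RInt_V; lra.
    - intros y Hy HVy. pose proof (SI_lower_bound y ltac:(lra)).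
      assert (- (M * B) <= (1 - p) * SI y) by (destruct (Rle_dec 0 (SI y)); nra).
      nra. }
  assert (r * M * B * (s - a) <= r * M * B * d); [|lra].
  apply Rmult_le_compat_l; [repeat apply Rmult_le_pos | ]; lra.
Qed.

Lemma W_lower_bound s : a <= s <= a + d -> - (r * M * B * d) <= W s.
Proof.
  intros Hs. rewrite W_eq by lra.
  rewrite <- (RInt_Chasles (V := R_CompleteNormedModule) _ (s - tau) a s)
    by (eexists; apply is_RInt_exp_SI; lra).
  assert (Hold : 0 <= RInt (fun y => exp y * SI y) (s - tau) a).
  { apply is_RInt_ge_0 with (2 := is_RInt_exp_SI (s - tau) a ltac:(lra) ltac:(lra)); [lra|].
    intros y Hy. apply Rmult_le_pos; [left; apply exp_pos | apply SI_nonneg_before; lra]. }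
  assert (Hnew : - (exp s * (M * B)) * (s - a) <= RInt (fun y => exp y * SI y) a s).
  { apply is_RInt_ge_const with (2 := is_RInt_exp_SI a s ltac:(lra) ltac:(lra)); [lra|].
    intros y Hy. pose proof (SI_lower_bound y ltac:(lra)). pose proof (exp_pos y).
    pose proof (exp_pos s).
    pose proof (exp_le_exp y s ltac:(lra)). assert (0 <= M * B) by (apply Rmult_le_pos; lra).
    destruct (Rle_dec 0 (SI y)).
    - assert (0 <= exp y * SI y) by (apply Rmult_le_pos; lra).
      assert (0 <= exp s * (M * B)) by (apply Rmult_le_pos; lra). lra.
    - assert (exp s * SI y <= exp y * SI y) by nra.
      assert (exp s * - (M * B) <= exp s * SI y) by (apply Rmult_le_compat_l; lra). lra. }
  assert (Hes : exp (- s) * exp s = 1) by (rewrite <- exp_plus, Rplus_opp_l; apply exp_0).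
  pose proof (exp_pos (- s)).
  assert (Hsum : - (M * B * (s - a)) <= exp (- s) * plus (RInt (fun y => exp y * SI y) (s - tau) a)
                                                         (RInt (fun y => exp y * SI y) a s)).
  { unfold plus; simpl.
    replace (- (M * B * (s - a))) with (exp (- s) * (- (exp s * (M * B)) * (s - a)))
      by (transitivity (- (exp (- s) * exp s * M * B * (s - a))); [ring | rewrite Hes; ring]).
    apply Rmult_le_compat_l; lra. }
  assert (HMB : 0 <= M * B * (s - a) <= M * B * d)
    by (split; [apply Rmult_le_pos | apply Rmult_le_compat_l]; nra).
  assert (Hrp : 0 <= r * p <= r) by (split; nra).
  rewrite (Rmult_assoc (r * p)). apply Rle_trans with (r * p * - (M * B * (s - a))).
  - nra.
  - apply Rmult_le_compat_l; lra.
Qed.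

Lemma SIV_lower_bound s : a <= s <= a + d ->
  - ((2 * r * M + 1) * d * B) <= S s /\ - ((2 * r * M + 1) * d * B) <= I s /\
  - ((2 * r * M + 1) * d * B) <= V s.
Proof.
  intros Hs. pose proof (S_lower_bound s Hs). pose proof (V_lower_bound s Hs).
  pose proof (W_lower_bound s Hs).
  assert (0 <= r * M * B * d) by (repeat apply Rmult_le_pos; lra).
  assert (EI : I s = V s + W s) by (unfold V; ring).
  split; [|split]; nra.
Qed.

End Extension.

(* With [K d <= 1/2] each pass of [SIV_lower_bound] halves the lower bound, starting from [-M]. *)
Lemma SIV_nonneg_extend a : 0 <= a -> (forall s, 0 <= s <= a -> 0 <= S s /\ 0 <= I s /\ 0 <= V s) ->
  exists d, 0 < d /\ forall s, a <= s <= a + d -> 0 <= S s /\ 0 <= I s /\ 0 <= V s.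
Proof.
  intros Ha Hpast.
  destruct (SI_bounded (a + tau)) as [M [HM0 HM]]; [lra|].
  set (K := 2 * r * M + 1). assert (HK : 1 <= K) by (unfold K; nra).
  set (d := Rmin (tau / 2) (1 / (2 * K))).
  assert (Hd : 0 < d) by (apply Rmin_pos; [lra | apply Rdiv_lt_0_compat; lra]).
  assert (Hdtau : d <= tau) by (assert (d <= tau / 2) by apply Rmin_l; lra).
  assert (HKd : K * d <= 1 / 2).
  { apply Rle_trans with (K * (1 / (2 * K))); [apply Rmult_le_compat_l; [lra | apply Rmin_r]|].
    right. field. lra. }
  assert (HMd : forall s, - tau - kappa <= s <= a + d -> Rabs (S s) <= M /\ Rabs (I s) <= M)
    by (intros s Hs; apply HM; lra).
  assert (Hgeo : forall (n : nat) s, a <= s <= a + d ->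
                   - (M / 2 ^ n) <= S s /\ - (M / 2 ^ n) <= I s).
  { induction n as [|n IH]; intros s Hs.
    - destruct (HMd s ltac:(lra)) as [HSM HIM]. apply Rabs_le_between in HSM, HIM.
      simpl. unfold Rdiv. rewrite Rinv_1, Rmult_1_r. lra.
    - assert (HB : 0 <= M / 2 ^ n) by (apply Rdiv_le_0_compat; [lra | apply pow_lt; lra]).
      destruct (SIV_lower_bound a d M (M / 2 ^ n) Ha Hd Hdtau HM0 HB Hpast HMd IH s Hs)
        as [HS [HI _]].
      assert (Hhalf : K * d * (M / 2 ^ n) <= M / 2 ^ Datatypes.S n).
      { replace (M / 2 ^ Datatypes.S n) with (1 / 2 * (M / 2 ^ n))
          by (simpl; field; apply pow_nonzero; lra).
        apply Rmult_le_compat_r; assumption. }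
      fold K in HS, HI. split; lra. }
  assert (HSI : forall s, a <= s <= a + d -> - 0 <= S s /\ - 0 <= I s).
  { intros s Hs. rewrite Ropp_0.
    split; apply nonneg_of_geometric_lower_bounds with M; try assumption;
      intros n; apply (Hgeo n s Hs). }
  exists d. split; [exact Hd|]. intros s Hs.
  destruct (SIV_lower_bound a d M 0 Ha Hd Hdtau HM0 (Rle_refl 0) Hpast HMd HSI s Hs)
    as [HS [HI HV]].
  rewrite Rmult_0_r, Ropp_0 in HS, HI, HV. auto.
Qed.

Lemma SIV_nonneg t : 0 <= t -> 0 <= S t /\ 0 <= I t /\ 0 <= V t.
Proof.
  revert t. apply (real_induction (fun t => 0 <= S t /\ 0 <= I t /\ 0 <= V t)).
  - destruct (history_S_I_nonneg 0) as [HS HI]; [lra|]. repeat split; auto. apply V0_nonneg.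
  - intros s Hs Hbefore.
    assert (Hcont : forall g, lipschitz_on g 0 s -> (forall y, 0 <= y < s -> 0 <= g y) -> 0 <= g s).
    { intros g Hg Hgy. apply nonneg_of_nonneg_before with 0; [lra | |exact Hgy].
      apply continuous_on_Icc_of_lipschitz_on, Hg. }
    repeat split; apply Hcont; try (intros y Hy; apply Hbefore, Hy).
    + apply lipschitz_S. lra.
    + apply lipschitz_I. lra.
    + apply lipschitz_V. lra.
  - exact SIV_nonneg_extend.
Qed.

Lemma SI_nonneg s : - tau - kappa <= s -> 0 <= SI s.
Proof.
  intros Hs. unfold SI. destruct (Rle_dec s 0).
  - destruct (history_S_I_nonneg s) as [HS HI]; [lra|]. apply Rmult_le_pos; assumption.
  - destruct (SIV_nonneg s) as [HS [HI _]]; [lra|]. apply Rmult_le_pos; assumption.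
Qed.

Let F (y : R) : R := RInt SI (- tau - kappa) y.

Lemma is_RInt_F u v : - tau - kappa <= u -> u <= v -> is_RInt SI u v (F v - F u).
Proof. intros Hu Huv. apply is_RInt_diff with (- tau - kappa); apply is_RInt_SI; lra. Qed.

Lemma Q_increment t : 0 <= t ->
  Q t - Q 0 = r * eps p tau * ((F (t - tau) - F (- tau))
                               - (F (t - tau - kappa) - F (- tau - kappa))).
Proof.
  intros Ht.
  pose proof (is_RInt_shift _ 0 t tau _
                (is_RInt_F (0 - tau) (t - tau) ltac:(lra) ltac:(lra))) as H1.
  pose proof (is_RInt_shift _ 0 t (tau + kappa) _
                (is_RInt_F (0 - (tau + kappa)) (t - (tau + kappa)) ltac:(lra) ltac:(lra))) as H2.
  pose proof (is_RInt_scal (V := R_NormedModule) _ _ _ (r * eps p tau) _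
                (is_RInt_minus (V := R_NormedModule) _ _ _ _ _ _ H1 H2)) as H.
  replace (0 - tau) with (- tau) in H by ring.
  replace (t - (tau + kappa)) with (t - tau - kappa) in H by ring.
  replace (0 - (tau + kappa)) with (- tau - kappa) in H by ring.
  rewrite <- (is_RInt_unique (V := R_CompleteNormedModule) _ _ _ _ (is_RInt_Q 0 t (Rle_refl 0) Ht)).
  apply (is_RInt_unique (V := R_CompleteNormedModule)).
  refine (is_RInt_ext _ _ _ _ _ _ H). intros s _.
  unfold SI, scal, minus, plus, opp; simpl; unfold mult; simpl.
  replace (s - (tau + kappa)) with (s - tau - kappa) by ring. ring.
Qed.

(* [Q t] exceeds [Q 0 - r eps \int_{-tau-kappa}^0 S I] by what entered quarantine during
   [[-tau, 0]] and [[t - tau - kappa, t - tau]]. *)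
Lemma Q_nonneg t : 0 <= t -> 0 <= Q t.
Proof.
  intros Ht. pose proof (Q_increment t Ht) as EQ.
  assert (HF0 : F (- tau - kappa) = 0) by exact (RInt_point (V := R_CompleteNormedModule) _ SI).
  assert (HQ0 : Q 0 >= r * eps p tau * F 0).
  { destruct (proj1 Hsol 0 ltac:(lra)) as [_ [_ ->]].
    replace (F 0) with (RInt (fun th => psS th * psI th) (- tau - kappa) 0); [exact HypQ|].
    apply RInt_ext. intros x Hx. rewrite Rmin_left, Rmax_right in Hx by lra.
    unfold SI. destruct (proj1 Hsol x ltac:(lra)) as [-> [-> _]]. reflexivity. }
  assert (Hhist : 0 <= F 0 - F (- tau)).
  { apply is_RInt_ge_0 with (2 := is_RInt_F (- tau) 0 ltac:(lra) ltac:(lra)); [lra|].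
    intros y Hy. apply SI_nonneg. lra. }
  assert (Hrecent : 0 <= F (t - tau) - F (t - tau - kappa)).
  { apply is_RInt_ge_0
      with (2 := is_RInt_F (t - tau - kappa) (t - tau) ltac:(lra) ltac:(lra)); [lra|].
    intros y Hy. apply SI_nonneg. lra. }
  assert (0 <= r * eps p tau * ((F 0 - F (- tau)) + (F (t - tau) - F (t - tau - kappa)))).
  { apply Rmult_le_pos; [apply Rmult_le_pos; [lra | apply eps_nonneg] | lra]. }
  rewrite HF0 in EQ. lra.
Qed.

Lemma solution_in_simplex t : - tau - kappa <= t -> in_simplex (S t) (I t) (Q t).
Proof.
  intros Ht. destruct (Rle_dec t 0); [apply history_simplex; lra|].
  destruct (SIV_nonneg t) as [HS [HI _]]; [lra|].
  repeat split; [exact HS | exact HI | apply Q_nonneg; lra | apply SIQ_sum; lra].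
Qed.

End SIQ.

Theorem lemma1 (r tau kappa p : R) (psS psI psQ S I Q : R -> R) :
  0 < r -> 0 < tau -> 0 < kappa -> 0 <= p <= 1 ->
  piecewise_continuous psS (- tau - kappa) 0 ->
  piecewise_continuous psI (- tau - kappa) 0 ->
  piecewise_continuous psQ (- tau - kappa) 0 ->
  (forall th, - tau - kappa <= th <= 0 -> in_simplex (psS th) (psI th) (psQ th)) ->
  psI 0 >= r * p * RInt (fun th => exp th * psS th * psI th) (- tau) 0 ->
  psQ 0 >= r * eps p tau * RInt (fun th => psS th * psI th) (- tau - kappa) 0 ->
  SIQ_solution r tau kappa p psS psI psQ S I Q ->
  (forall t, 0 <= t -> 0 <= S t /\ 0 <= I t /\ 0 <= Q t /\ S t + I t + Q t = 1) /\
  (forall t, tau + kappa <= t -> in_Ctilde tau kappa (seg S t) (seg I t) (seg Q t)) /\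
  (in_Ctilde tau kappa psS psI psQ ->
     forall t, 0 <= t -> in_Ctilde tau kappa (seg S t) (seg I t) (seg Q t)).
Proof.
  intros Hr Htau Hkappa Hp PCS PCI _ Hsimplex HypI HypQ Hsol.
  pose proof (solution_in_simplex r tau kappa p psS psI psQ S I Q
                Hr Htau Hkappa Hp PCS PCI Hsimplex HypI HypQ Hsol) as Hsimp.
  assert (Hlip : forall t, 0 <= t ->
                   lipschitz_on S 0 t /\ lipschitz_on I 0 t /\ lipschitz_on Q 0 t).
  { intros t Ht. repeat split; [eapply lipschitz_S | eapply lipschitz_I | eapply lipschitz_Q];
      eauto; lra. }
  split; [|split].
  - intros t Ht. apply Hsimp. lra.
  - intros t Ht. destruct (Hlip t ltac:(lra)) as [LS [LI LQ]].
    split; [|split; [|split]]; intros th Hth;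
      try (apply cont_within_seg_of_lipschitz_on; [lra | assumption | exact Hth]).
    apply Hsimp. lra.
  - intros [CS [CI [CQ _]]] t Ht. destruct (Hlip t Ht) as [LS [LI LQ]].
    assert (Hhist : forall y, - tau - kappa <= y <= 0 -> psS y = S y /\ psI y = I y /\ psQ y = Q y)
      by (intros y Hy; destruct (proj1 Hsol y Hy) as [-> [-> ->]]; auto).
    split; [|split; [|split]]; intros th Hth.
    + apply (cont_within_seg_glue psS); try assumption; [lra | apply Hhist].
    + apply (cont_within_seg_glue psI); try assumption; [lra | apply Hhist].
    + apply (cont_within_seg_glue psQ); try assumption; [lra | apply Hhist].
    + apply Hsimp. lra.
Qed.
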